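(* Let $C$ be a small category, $T$ an object of $C$, and let $\xi_*,\xi'_*:(X,f)\to(Y,g)$ be morphisms of the left fiber $(\Delta/C)/T$ such that $\xi_*\sim\xi'_*$ as morphisms of $\Delta/C$. Then $r(\xi_* )\sim r(\xi'_* )$.
   Context: For $q\ge0$, $[q]=\{0<\dots<q\}$. A $q$-simplex of the nerve $NC$ is a functor $X:[q]\to C$, i.e. a chain $X_0\to\dots\to X_q$; $q_X=q$; $X(i\to j)$ is the composite $X_i\to X_j$. $\Delta/C$ has all simplices as objects and as morphisms $X\to Y$ the order-preserving $\xi:[q_X]\to[q_Y]$ with $Y\circ\xi=X$, written $\xi_*$. For a $q$-simplex $X$ and surjective order-preserving $s:[q+1]\to[q]$ with order-preserving right inverses $d,d'$, $d_*,d'_*:X\to X\circ s$ are elementary equivalent; $\sim$ is the smallest equivalence relation on morphisms of $\Delta/C$ (with same source and target) compatible with composition containing all elementary equivalent pairs. $\sup:\Delta/C\to C$ sends $X$ to $X_{q_X}$ and $\xi_*:X\to Y$ to $Y(\xi(q_X)\to q_Y)$. The left fiber $(\Delta/C)/T$ has objects pairs $(X,f)$ with $f:X_{q_X}\to T$, and morphisms $(X,f)\to(Y,g)$ the morphisms $\xi_*:X\to Y$ of $\Delta/C$ with $g\circ\sup(\xi_* )=f$. For an object $(X,f)$, $r(X,f)$ is the $(q_X+1)$-simplex $X_0\to\dots\to X_{q_X}\xrightarrow{f}T$. For a morphism $\xi_*:(X,f)\to(Y,g)$, $r(\xi_* ):r(X,f)\to r(Y,g)$ is the morphism of $\Delta/C$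 given by the order-preserving map $[q_X+1]\to[q_Y+1]$ sending $j\mapsto\xi(j)$ for $0\le j\le q_X$ and $q_X+1\mapsto q_Y+1$. *)

From mathcomp Require Import all_boot.
Set Implicit Arguments. Unset Strict Implicit. Unset Printing Implicit Defensive.

(* A (small) category, in the single-sorted presentation:
   objects Ob, arrows Arr with dom/cod, identities and composition
   [comp g f] = g o f (meaningful when cod f = dom g). *)
Record category := Category {
  Ob : Type;
  Arr : Type;
  dom : Arr -> Ob;
  cod : Arr -> Ob;
  idC : Ob -> Arr;
  comp : Arr -> Arr -> Arr;
  dom_id : forall a, dom (idC a) = a;
  cod_id : forall a, cod (idC a) = a;
  dom_comp : forall f g, cod f = dom g -> dom (comp g f) = dom f;
  cod_comp : forall f g, cod f = dom g -> cod (comp g f) = cod g;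
  comp_id_l : forall f, comp (idC (cod f)) f = f;
  comp_id_r : forall f, comp f (idC (dom f)) = f;
  comp_assoc : forall f g h, cod f = dom g -> cod g = dom h ->
    comp h (comp g f) = comp (comp h g) f }.
Arguments dom {c}. Arguments cod {c}. Arguments idC {c}. Arguments comp {c}.

Section Nerve.
Variable C : category.

(* A q-simplex of NC: a chain X_0 -> X_1 -> ... -> X_q
   (objects sob i, i <= q, and arrows sst i : X_i -> X_{i+1}, i < q). *)
Record simplex := Simplex {
  sq : nat;
  sob : 'I_sq.+1 -> Ob C;
  sst : 'I_sq -> Arr C }.
Arguments sob : clear implicits.
Arguments sst : clear implicits.

Definition is_simplex (X : simplex) : Prop :=
  forall i : 'I_(sq X),
    dom (sst X i) = sob X (widen_ord (leqnSn _) i) /\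
    cod (sst X i) = sob X (lift ord0 i).

(* nat-indexed access (default values outside the range are irrelevant) *)
Definition obn (X : simplex) (k : nat) : Ob C :=
  if (insub k : option 'I_(sq X).+1) is Some i then sob X i else sob X ord0.
Definition stn (X : simplex) (k : nat) : Arr C :=
  if (insub k : option 'I_(sq X)) is Some i then sst X i else idC (obn X k).

Fixpoint homn (X : simplex) (i n : nat) : Arr C :=
  match n with
  | 0 => idC (obn X i)
  | n'.+1 => comp (stn X (i + n')) (homn X i n')
  end.

(* X(i -> j) for i <= j *)
Definition hom (X : simplex) (i j : nat) : Arr C := homn X i (j - i).

Definition smap (X Y : simplex) := {ffun 'I_(sq X).+1 -> 'I_(sq Y).+1}.

Definition monotone m n (h : 'I_m -> 'I_n) : Prop :=
  forall i j : 'I_m, i <= j -> h i <= h j.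

(* xi is a morphism X -> Y of Delta/C : order preserving with Y o xi = X *)
Definition is_mor (X Y : simplex) (xi : smap X Y) : Prop :=
  monotone xi /\
  (forall i, sob Y (xi i) = sob X i) /\
  (forall i j : 'I_(sq X).+1, i <= j -> hom Y (xi i) (xi j) = hom X i j).

Definition mcomp (X Y Z : simplex) (eta : smap Y Z) (xi : smap X Y) : smap X Z :=
  [ffun i => eta (xi i)].

(* X o s, for s : [q+1] -> [q] *)
Definition precomp (X : simplex) (s : {ffun 'I_(sq X).+2 -> 'I_(sq X).+1}) :
  simplex :=
  @Simplex (sq X).+1 (fun i => sob X (s i))
    (fun i : 'I_(sq X).+1 =>
       hom X (s (widen_ord (leqnSn _) i)) (s (lift ord0 i))).

Arguments precomp : clear implicits.

(* The equivalence relation ~ on morphisms of Delta/C: the smallest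
   equivalence relation on parallel morphisms, compatible with composition,
   containing all elementary equivalent pairs. *)
Inductive sim : forall X Y : simplex, smap X Y -> smap X Y -> Prop :=
| sim_elem (X : simplex) (s : {ffun 'I_(sq X).+2 -> 'I_(sq X).+1})
    (d d' : smap X (precomp X s)) :
    is_simplex X -> monotone s -> (forall j, exists i, s i = j) ->
    monotone d -> monotone d' ->
    (forall j, s (d j) = j) -> (forall j, s (d' j) = j) ->
    sim d d'
| sim_refl (X Y : simplex) (xi : smap X Y) :
    is_simplex X -> is_simplex Y -> is_mor xi -> sim xi xi
| sim_sym (X Y : simplex) (xi xi' : smap X Y) : sim xi xi' -> sim xi' xi
| sim_trans (X Y : simplex) (xi xi' xi'' : smap X Y) :
    sim xi xi' -> sim xi' xi'' -> sim xi xi''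
| sim_comp (X Y Z : simplex) (xi xi' : smap X Y) (eta eta' : smap Y Z) :
    sim xi xi' -> sim eta eta' -> sim (mcomp eta xi) (mcomp eta' xi').

Definition sup (X Y : simplex) (xi : smap X Y) : Arr C :=
  hom Y (xi ord_max) (sq Y).

Definition fib_obj (T : Ob C) (X : simplex) (f : Arr C) : Prop :=
  is_simplex X /\ dom f = sob X ord_max /\ cod f = T.

Definition fib_mor (T : Ob C) (X : simplex) (f : Arr C) (Y : simplex)
  (g : Arr C) (xi : smap X Y) : Prop :=
  is_mor xi /\ comp g (sup xi) = f.

(* r(X,f) = X_0 -> ... -> X_q -f-> T *)
Definition rsimp (T : Ob C) (X : simplex) (f : Arr C) : simplex :=
  @Simplex (sq X).+1
    (fun i : 'I_(sq X).+2 => if (i <= sq X)%N then obn X i else T)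
    (fun i : 'I_(sq X).+1 => if (i < sq X)%N then stn X i else f).

Definition rmap (T : Ob C) (X : simplex) (f : Arr C) (Y : simplex) (g : Arr C)
  (xi : smap X Y) : smap (rsimp T X f) (rsimp T Y g) :=
  [ffun j : 'I_(sq X).+2 =>
     if (insub (val j) : option 'I_(sq X).+1) is Some j'
     then widen_ord (leqnSn _) (xi j') else ord_max].

End Nerve.
Arguments fib_mor {C} T X f Y g xi.
Arguments fib_obj {C} T X f.

From mathcomp Require Import all_boot zify.
From Stdlib Require Import FunctionalExtensionality.
Set Implicit Arguments. Unset Strict Implicit. Unset Printing Implicit Defensive.

(* Induct on the derivation of [xi ~ xi'], carrying along that equivalent
   morphisms have the same [sup], so the fibre condition [g o sup xi = f]
   holds at every node of the derivation.  Composition lifts because [r] is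
   functorial: [r(eta o xi) = r(eta) o r(xi)], the middle object of the fibre
   being [(Y, g o sup eta)].  For an elementary pair [d, d' : X -> X o s] we
   have [sup d = id], hence [f = g], and [r(X o s, f) = r(X, f) o r(s)] with
   [r(s)] again a monotone surjection split by [r(d)] and [r(d')]. *)

Lemma ord_top_val n (i : 'I_n.+1) : n <= i -> i = n :> nat.
Proof. by move=> le; apply/eqP; rewrite eqn_leq le -ltnS ltn_ord. Qed.

Section Nerve.
Variable C : category.
Implicit Types X Y Z : simplex C.

Lemma obnE X (i : 'I_(sq X).+1) : obn X i = @sob _ X i.
Proof. by rewrite /obn valK. Qed.

Lemma stnE X (i : 'I_(sq X)) : stn X i = @sst _ X i.
Proof. by rewrite /stn valK. Qed.

Section Composites.
Variable X : simplex C.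
Hypothesis HX : is_simplex X.

Lemma stn_ends k : k < sq X ->
  dom (stn X k) = obn X k /\ cod (stn X k) = obn X k.+1.
Proof.
move=> lt; have [D1 D2] := HX (Ordinal lt).
by rewrite -[k]/(val (Ordinal lt)) stnE D1 D2 -!obnE.
Qed.

Lemma homn_ends i n : i + n <= sq X ->
  dom (homn X i n) = obn X i /\ cod (homn X i n) = obn X (i + n).
Proof.
elim: n => [|n IH]; first by rewrite dom_id cod_id addn0.
rewrite addnS => lt /=.
have [D1 D2] := IH (ltnW lt); have [S1 S2] := stn_ends lt.
by rewrite dom_comp ?cod_comp ?S2 // D2 S1.
Qed.

Lemma homnD i m n : i + m + n <= sq X ->
  homn X i (m + n) = comp (homn X (i + m) n) (homn X i m).
Proof.
elim: n => [|n IH] /=.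
  by rewrite !addn0 => le; have [_ <-] := homn_ends le; rewrite comp_id_l.
rewrite addnS => le; have le' := ltnW le.
have [_ D2] := homn_ends (leq_trans (leq_addr n _) le' : i + m <= sq X).
have [E1 E2] := homn_ends le'.
have [S1 _] := stn_ends le.
by rewrite addnS /= IH // addnA comp_assoc ?D2 ?E1 ?E2 ?S1.
Qed.

Lemma hom_ends i j : i <= j -> j <= sq X ->
  dom (hom X i j) = obn X i /\ cod (hom X i j) = obn X j.
Proof. by move=> le lej; have := @homn_ends i (j - i); rewrite subnKC //; apply. Qed.

Lemma hom_comp i j k : i <= j -> j <= k -> k <= sq X ->
  hom X i k = comp (hom X j k) (hom X i j).
Proof.
move=> le1 le2 le3; rewrite /hom.
have -> : k - i = (j - i) + (k - j) by lia.
by rewrite homnD subnKC // subnKC.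
Qed.

End Composites.

Lemma hom_refl X i : hom X i i = idC (obn X i).
Proof. by rewrite /hom subnn. Qed.

Lemma simplexP n (a a' : 'I_n.+1 -> Ob C) (b b' : 'I_n -> Arr C) :
  a =1 a' -> b =1 b' -> Simplex a b = Simplex a' b'.
Proof.
by move=> /functional_extensionality -> /functional_extensionality ->.
Qed.

Section Precomposition.
Variables (X : simplex C) (s : {ffun 'I_(sq X).+2 -> 'I_(sq X).+1}).
Hypotheses (HX : is_simplex X) (s_mono : monotone s).

Lemma precomp_obn k : k <= (sq X).+1 -> obn (precomp s) k = obn X (s (inord k)).
Proof.
by move=> le; rewrite -{1}(inordK (le : k < (sq X).+2)) (@obnE (precomp s)) obnE.
Qed.

Lemma precomp_stn k : k <= sq X ->
  stn (precomp s) k = hom X (s (inord k)) (s (inord k.+1)).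
Proof.
move=> le; rewrite -{1}(inordK (le : k < (sq X).+1)) (@stnE (precomp s)) /=.
by congr (hom X (s _) (s _)); apply: val_inj; rewrite /= ?/bump /= !inordK //; lia.
Qed.

Lemma precomp_homn i n : i + n <= (sq X).+1 ->
  homn (precomp s) i n = hom X (s (inord i)) (s (inord (i + n))).
Proof.
have s_inord j k : j <= k -> k <= (sq X).+1 -> s (inord j) <= s (inord k).
  by move=> le lek; apply: s_mono; rewrite !inordK //; lia.
elim: n => [|n IH]; first by rewrite addn0 => le /=; rewrite hom_refl precomp_obn.
rewrite addnS => le /=.
rewrite IH ?precomp_stn; try lia.
rewrite -(hom_comp HX (i := s (inord i))) ?s_inord //; try lia.
by rewrite -ltnS.
Qed.

Lemma precomp_hom i j : i <= j -> j <= (sq X).+1 ->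
  hom (precomp s) i j = hom X (s (inord i)) (s (inord j)).
Proof. by move=> le lej; rewrite /hom precomp_homn subnKC //; lia. Qed.

Lemma precomp_simplex : is_simplex (precomp s).
Proof.
move=> i /=.
have le : s (widen_ord (leqnSn _) i) <= s (lift ord0 i).
  by apply: s_mono; rewrite /= /bump /=; lia.
have [D1 D2] := hom_ends HX le (ltnSE (ltn_ord _)).
by rewrite D1 D2 !obnE.
Qed.

End Precomposition.

Section Cone.
Variables (T : Ob C) (X : simplex C) (f : Arr C).
Local Notation R := (rsimp T X f).

Lemma rsimp_sob (i : 'I_(sq R).+1) :
  @sob _ R i = if (i : nat) <= sq X then obn X i else T.
Proof. by []. Qed.

Lemma rsimp_obn k : k <= sq X -> obn R k = obn X k.
Proof.
move=> le; have lt : k < (sq X).+2 := leqW le.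
by rewrite -{1}(inordK lt) (@obnE R) /= (inordK lt) le.
Qed.

Lemma rsimp_obn_top : obn R (sq X).+1 = T.
Proof. by have := @obnE R ord_max; rewrite /= ltnn. Qed.

Lemma rsimp_stn k : k < sq X -> stn R k = stn X k.
Proof.
move=> lt; have lt' : k < (sq X).+1 := ltnW lt.
by rewrite -{1}(inordK lt') (@stnE R) /= (inordK lt') lt.
Qed.

Lemma rsimp_stn_top : stn R (sq X) = f.
Proof. by have := @stnE R ord_max; rewrite /= ltnn. Qed.

Lemma rsimp_homn i n : i + n <= sq X -> homn R i n = homn X i n.
Proof.
elim: n => [|n IH] le /=; first by rewrite rsimp_obn //; lia.
by rewrite IH ?rsimp_stn //; lia.
Qed.

Lemma rsimp_hom i j : i <= j -> j <= sq X -> hom R i j = hom X i j.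
Proof. by move=> le lej; rewrite /hom rsimp_homn // subnKC. Qed.

Lemma rsimp_hom_top i : i <= sq X -> hom R i (sq X).+1 = comp f (hom X i (sq X)).
Proof.
by move=> le; rewrite /hom subSn //= subnKC // rsimp_stn_top rsimp_homn ?subnKC.
Qed.

Lemma rsimp_hom_top_top : hom R (sq X).+1 (sq X).+1 = idC T.
Proof. by rewrite hom_refl rsimp_obn_top. Qed.

Lemma rsimp_simplex : is_simplex X -> dom f = @sob _ X ord_max -> cod f = T ->
  is_simplex R.
Proof.
move=> HX Df Cf i /=; case: (ltnP i (sq X)) => lt.
  by have [D1 D2] := stn_ends HX lt; rewrite (ltnW lt) D1 D2.
by rewrite ord_top_val // leqnn Df Cf -(@obnE X ord_max).
Qed.

End Cone.

Section Morphisms.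
Variables X Y Z : simplex C.

Lemma sup_ends (xi : smap X Y) : is_simplex Y -> is_mor xi ->
  dom (sup xi) = @sob _ X ord_max /\ cod (sup xi) = @sob _ Y ord_max.
Proof.
move=> HY [_ [xi_sob _]].
have [D1 D2] := hom_ends HY (leq_ord (xi ord_max)) (leqnn _).
by rewrite /sup D1 D2 obnE xi_sob -(@obnE Y ord_max).
Qed.

Lemma hom_sup (xi : smap X Y) (i : 'I_(sq X).+1) : is_simplex Y -> is_mor xi ->
  hom Y (xi i) (sq Y) = comp (sup xi) (hom X i (sq X)).
Proof.
move=> HY [xi_mono [_ xi_hom]].
rewrite (hom_comp HY (j := xi ord_max)) ?xi_mono ?leq_ord //.
by rewrite (xi_hom i ord_max) ?leq_ord.
Qed.

Lemma mor_mcomp (xi : smap X Y) (eta : smap Y Z) :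
  is_mor xi -> is_mor eta -> is_mor (mcomp eta xi).
Proof.
move=> [xi_mono [xi_sob xi_hom]] [eta_mono [eta_sob eta_hom]].
split; [|split] => [i j le|i|i j le]; rewrite !ffunE.
- exact/eta_mono/xi_mono.
- by rewrite eta_sob.
- by rewrite eta_hom ?xi_hom ?xi_mono.
Qed.

Lemma sup_mcomp (xi : smap X Y) (eta : smap Y Z) :
  is_simplex Z -> is_mor xi -> is_mor eta ->
  sup (mcomp eta xi) = comp (sup eta) (sup xi).
Proof.
move=> HZ [xi_mono _] [eta_mono [_ eta_hom]].
rewrite /sup ffunE (hom_comp HZ (j := eta ord_max)) ?eta_hom ?eta_mono ?leq_ord //.
Qed.

End Morphisms.

Section ConeMorphisms.
Variables (T : Ob C) (X Y : simplex C) (f g : Arr C).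

Lemma rmapE (xi : smap X Y) (j : 'I_(sq (rsimp T X f)).+1) :
  nat_of_ord (rmap T f g xi j) =
    if j <= sq X then nat_of_ord (xi (inord j)) else (sq Y).+1.
Proof.
rewrite /rmap ffunE; case: insubP => [j' le E | nle] /=.
  by rewrite ifT //; congr (nat_of_ord (xi _)); apply: val_inj; rewrite /= E inordK.
by rewrite ifF //; apply: negbTE.
Qed.

Lemma rmap_monotone (xi : smap X Y) : monotone xi -> monotone (rmap T f g xi).
Proof.
move=> xi_mono i j le; rewrite !rmapE.
case: ifP => hi; case: ifP => hj //.
- by apply: xi_mono; rewrite !inordK.
- exact: ltnW.
- by move: (leq_trans le hj); rewrite hi.
Qed.

Lemma rmap_mor (xi : smap X Y) :
  is_simplex X -> is_simplex Y -> is_mor xi -> dom g = @sob _ Y ord_max ->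
  comp g (sup xi) = f -> is_mor (rmap T f g xi).
Proof.
move=> HX HY Mxi Dg Ef; have [xi_mono [xi_sob xi_hom]] := Mxi.
split; [exact: rmap_monotone|split].
  move=> j; rewrite !rsimp_sob !rmapE; case: (leqP j (sq X)) => hj; last by rewrite ltnn.
  by rewrite leq_ord obnE xi_sob -obnE inordK.
move=> i j le; rewrite !rmapE.
case: (leqP j (sq X)) => hj; case: (leqP i (sq X)) => hi.
- rewrite !rsimp_hom ?xi_mono ?inordK ?leq_ord //.
  by have := xi_hom (inord i) (inord j); rewrite !inordK //; apply.
- by move: (leq_trans (leq_trans hi le) hj); rewrite ltnn.
- rewrite (ord_top_val hj) !rsimp_hom_top ?leq_ord // hom_sup // -Ef inordK //.
  have [Dsup Csup] := sup_ends HY Mxi; have [_ Ch] := hom_ends HX hi (leqnn _).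
  by rewrite comp_assoc // ?Ch ?Dsup ?Csup ?Dg // -(@obnE X ord_max).
- by rewrite (ord_top_val hi) (ord_top_val hj) !rsimp_hom_top_top.
Qed.

End ConeMorphisms.

Lemma rmap_mcomp T X Y Z f h g (xi : smap X Y) (eta : smap Y Z) :
  rmap T f g (mcomp eta xi) = mcomp (rmap T h g eta) (rmap T f h xi).
Proof.
apply/ffunP => j; apply: val_inj.
rewrite [in RHS]ffunE /= !rmapE; case: (leqP j (sq X)) => hj; last by rewrite ltnn.
by rewrite leq_ord inord_val ffunE.
Qed.

Lemma sim_congr (A B B' : simplex C) (a b : smap A B) (a' b' : smap A B') :
  B = B' -> (forall i, val (a i) = val (a' i)) -> (forall i, val (b i) = val (b' i)) ->
  sim a' b' -> sim a b.
Proof.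
move=> EB; subst B' => Ea Eb.
have -> : a = a' by apply/ffunP => i; apply: val_inj.
by have -> : b = b' by apply/ffunP => i; apply: val_inj.
Qed.

Section Elementary.
Variables (T : Ob C) (X : simplex C) (s : {ffun 'I_(sq X).+2 -> 'I_(sq X).+1}).
Hypotheses (HX : is_simplex X) (s_mono : monotone s) (s_onto : forall j, exists i, s i = j).
Local Notation P := (precomp s).
Implicit Type e : smap X P.

Lemma s_ord_max : s ord_max = ord_max.
Proof.
have [i si] := s_onto ord_max; apply/val_inj/eqP; rewrite /= eqn_leq leq_ord /=.
by have := s_mono (leq_ord i : i <= (ord_max : 'I_(sq X).+2)); rewrite si.
Qed.

Lemma sup_section e : (forall j, s (e j) = j) -> sup e = idC (obn X (sq X)).
Proof.
move=> se; rewrite /sup precomp_hom ?leq_ord // inord_val.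
have -> : inord (sq P) = ord_max :> 'I_(sq X).+2 by apply: val_inj; rewrite /= inordK.
by rewrite se s_ord_max hom_refl.
Qed.

Lemma section_mor e : monotone e -> (forall j, s (e j) = j) -> is_mor e.
Proof.
move=> e_mono se; split => //; split => [i|i j le] /=; first by rewrite se.
by rewrite precomp_hom ?e_mono ?leq_ord // !inord_val !se.
Qed.

Variable g : Arr C.
Hypothesis Dg : dom g = @sob _ X ord_max.
Local Notation rs := (@rmap _ T P g X g s).
Local Notation rP := (@precomp _ (rsimp T X g) rs).

Lemma rsimp_precomp : rsimp T P g = rP.
Proof.
apply: simplexP => i /=.
  rewrite rmapE; case: (leqP i (sq P)) => hi; last by rewrite ltnn.
  by rewrite leq_ord precomp_obn.
rewrite !rmapE /= /bump /= add1n; case: (ltnP i (sq P)) => hi.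
  rewrite ifT ?precomp_stn ?rsimp_hom ?leq_ord //.
  by apply: s_mono; rewrite /= !inordK //=; lia.
rewrite (ord_top_val hi) /= ltnSn.
have -> : inord (sq X).+1 = ord_max :> 'I_(sq X).+2 by apply: val_inj; rewrite /= inordK.
by rewrite s_ord_max rsimp_hom_top // hom_refl obnE -Dg comp_id_r.
Qed.

Lemma rmap_section e : (forall j, s (e j) = j) -> forall j, rs (rmap T g g e j) = j.
Proof.
move=> se j; apply: val_inj; rewrite /= !rmapE.
case: (leqP j (sq X)) => hj; first by rewrite leq_ord inord_val se inordK.
by rewrite ltnn ord_top_val.
Qed.

Lemma rmap_onto j : exists i, rs i = j.
Proof.
case: (leqP j (sq X)) => hj.
  have [i si] := s_onto (inord j); exists (widen_ord (leqnSn _) i); apply: val_inj.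
  by rewrite /= rmapE /= leq_ord inord_val si inordK.
by exists ord_max; apply: val_inj; rewrite /= rmapE /= ltnn ord_top_val.
Qed.

Lemma sim_rmap_elem (d d' : smap X P) : cod g = T ->
  monotone d -> monotone d' -> (forall j, s (d j) = j) -> (forall j, s (d' j) = j) ->
  sim (rmap T g g d) (rmap T g g d').
Proof.
move=> Cg d_mono d'_mono sd sd'.
apply: (sim_congr (a' := rmap T g g d : smap _ rP) (b' := rmap T g g d' : smap _ rP)
                  rsimp_precomp) => //.
apply: sim_elem.
- exact: rsimp_simplex.
- exact: rmap_monotone.
- exact: rmap_onto.
- exact: rmap_monotone.
- exact: rmap_monotone.
- exact: rmap_section.
- exact: rmap_section.
Qed.

End Elementary.

Lemma sim_mor_sup X Y (xi xi' : smap X Y) : sim xi xi' ->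
  [/\ is_simplex X, is_simplex Y, is_mor xi, is_mor xi' & sup xi = sup xi'].
Proof.
elim=> {X Y xi xi'}.
- move=> X s d d' HX s_mono s_onto d_mono d'_mono sd sd'.
  split; [done | exact: precomp_simplex | exact: section_mor | exact: section_mor |].
  by rewrite (sup_section HX s_mono s_onto sd) (sup_section HX s_mono s_onto sd').
- by [].
- by move=> X Y xi xi' _ [].
- by move=> X Y xi xi' xi'' _ [HX HY M _ ->] _ [].
- move=> X Y Z xi xi' eta eta' _ [HX HY Mxi Mxi' Exi] _ [_ HZ Meta Meta' Eeta].
  by split; rewrite ?sup_mcomp ?Exi ?Eeta //; apply: mor_mcomp.
Qed.

Lemma sim_rmap T X Y (xi xi' : smap X Y) : sim xi xi' ->
  forall f g, dom g = @sob _ Y ord_max -> cod g = T -> comp g (sup xi) = f ->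
  sim (rmap T f g xi) (rmap T f g xi').
Proof.
elim=> {X Y xi xi'}.
- move=> X s d d' HX s_mono s_onto d_mono d'_mono sd sd' f g Dg Cg <-.
  rewrite (sup_section HX s_mono s_onto sd).
  have Dg' : dom g = @sob _ X ord_max by rewrite Dg /= s_ord_max.
  have -> : obn X (sq X) = dom g by rewrite Dg' -(@obnE X ord_max).
  by rewrite comp_id_r; apply: sim_rmap_elem.
- move=> X Y xi HX HY Mxi f g Dg Cg Ef.
  have [Dsup Csup] := sup_ends HY Mxi.
  have Df : dom f = @sob _ X ord_max by rewrite -Ef dom_comp // Csup.
  have Cf : cod f = T by rewrite -Ef cod_comp // Csup.
  by apply: sim_refl; [exact: rsimp_simplex | exact: rsimp_simplex | exact: rmap_mor].
- move=> X Y xi xi' Hsim IH f g Dg Cg Ef; apply: sim_sym; apply: IH => //.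
  by have [_ _ _ _ ->] := sim_mor_sup Hsim.
- move=> X Y xi xi' xi'' Hsim IH _ IH' f g Dg Cg Ef.
  apply: sim_trans (IH _ _ Dg Cg Ef) (IH' _ _ Dg Cg _).
  by have [_ _ _ _ <-] := sim_mor_sup Hsim.
- move=> X Y Z xi xi' eta eta' Hxi IHxi Heta IHeta f g Dg Cg Ef.
  have [_ HY Mxi _ _] := sim_mor_sup Hxi; have [_ HZ Meta _ _] := sim_mor_sup Heta.
  have [_ Cxi] := sup_ends HY Mxi; have [Deta Ceta] := sup_ends HZ Meta.
  rewrite !(rmap_mcomp T f (comp g (sup eta)) g).
  apply: sim_comp; last exact: IHeta.
  apply: IHxi; rewrite ?dom_comp ?cod_comp ?Ceta //.
  by rewrite -Ef sup_mcomp // comp_assoc // ?Cxi ?Deta ?Ceta.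
Qed.

End Nerve.

Theorem lemma30 (C : category) (T : Ob C) (X Y : simplex C) (f g : Arr C)
  (xi xi' : smap X Y) :
  fib_obj T X f -> fib_obj T Y g ->
  fib_mor T X f Y g xi -> fib_mor T X f Y g xi' ->
  sim xi xi' ->
  sim (rmap T f g xi) (rmap T f g xi').
Proof.
move=> _ [_ [Dg Cg]] [_ Ef] _ Hsim.
exact: sim_rmap Hsim f g Dg Cg Ef.
Qed.
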